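(* For $\sigma>0$ and $\mu\in\mathbb{R}$ with $|\mu|\ge r(\sigma)$, we have $q_\sigma(\mu)\ge\frac14\sigma\,\ell_{exp}(\mu)>0$.
   Context: $\ell_{exp}(t)=\exp(-|t|)$. For $\sigma\ge0$, $g_\sigma(\mu)=\mathbb{E}_{Z\sim\mathcal{N}(0,1)}[\ell_{exp}(\mu+\sigma Z)]$ and $q_\sigma(\mu)=\frac{\partial}{\partial\sigma}g_\sigma(\mu)$. The function $r(\sigma)=\sigma^2+\sigma\sqrt{2\log\frac{4\sqrt2}{\sqrt\pi\sigma}}$ for $0<\sigma\le\frac{4\sqrt2}{\sqrt\pi}$ and $r(\sigma)=2\sigma^2$ for $\sigma>\frac{4\sqrt2}{\sqrt\pi}$. *)

From Stdlib Require Import Reals.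
From Coquelicot Require Import Coquelicot.
Open Scope R_scope.

Definition ell_exp (t : R) : R := exp (- Rabs t).

Definition gauss_density (z : R) : R := exp (- z ^ 2 / 2) / sqrt (2 * PI).

Definition g (sigma mu : R) : R :=
  RInt_gen (fun z => ell_exp (mu + sigma * z) * gauss_density z)
           (Rbar_locally m_infty) (Rbar_locally p_infty).

Definition c0 : R := 4 * sqrt 2 / sqrt PI.

Definition r (sigma : R) : R :=
  if Rle_dec sigma c0
  then sigma ^ 2 + sigma * sqrt (2 * ln (c0 / sigma))
  else 2 * sigma ^ 2.

(* K t = int_0^t exp(-y^2/2) dy tends to sqrt(pi/2) at +oo,
      by Feynman's trick: K t ^ 2 + 2 int_0^1 exp(-t^2(1+x^2)/2)/(1+x^2) dx has zero
      derivative, equals pi/2 at t = 0, and its second summand vanishes at +oo.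
   2. Phi x = K x / sqrt(2 pi) = P(0 <= Z <= x) is a primitive of the standard normal
      density, odd, nondecreasing, with limits -1/2 and 1/2 at -oo and +oo.
   3. Closed form.  Splitting the integral defining g at z0 = -mu/s, where the sign of
      mu + s z changes, each half is a shifted Gaussian integral, so for s > 0
        g s mu = G s mu := e^(s^2/2-mu) (1/2 - Phi(s-mu/s)) + e^(s^2/2+mu) (1/2 + Phi(-mu/s-s)).
   4. Differentiating: d/ds G s mu = s G s mu - 2 e^(-mu^2/(2 s^2)) / sqrt(2 pi).
   5. Estimates for |mu| >= r s (hence |mu| >= s^2): G s mu >= e^(s^2/2-|mu|)/2, and
      e^(-mu^2/(2 s^2)) = e^(s^2/2-|mu|) e^(-(|mu|-s^2)^2/(2 s^2)) <= e^(s^2/2-|mu|) s/c0,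
      where 2/sqrt(2 pi) * s/c0 = s/4.  Hence the derivative is at least
      s e^(s^2/2-|mu|) (1/2 - 1/4) >= s e^(-|mu|)/4.
   The lemmas below follow these five steps in order; lemma5 combines them. *)
From Stdlib Require Import Reals Lra.
From Coquelicot Require Import Coquelicot.
Open Scope R_scope.

(* Real-valued specialisations of Coquelicot lemmas stated over normed modules,
   whose module argument is not inferred for functions R -> R. *)
Lemma ex_derive_continuous_R (f : R -> R) x : ex_derive f x -> continuous f x.
Proof. exact (ex_derive_continuous (K := R_AbsRing) (V := R_NormedModule) f x). Qed.

Lemma ex_RInt_continuous_R (f : R -> R) a b :
  (forall z, Rmin a b <= z <= Rmax a b -> continuous f z) -> ex_RInt f a b.
Proof. exact (ex_RInt_continuous (V := R_CompleteNormedModule) f a b). Qed.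

Lemma RInt_correct_R (f : R -> R) a b : ex_RInt f a b -> is_RInt f a b (RInt f a b).
Proof. exact (RInt_correct (V := R_CompleteNormedModule) f a b). Qed.

Lemma is_RInt_unique_R (f : R -> R) a b l : is_RInt f a b l -> RInt f a b = l.
Proof. exact (is_RInt_unique (V := R_CompleteNormedModule) f a b l). Qed.

Lemma RInt_scal_R (f : R -> R) k a b :
  ex_RInt f a b -> RInt (fun x => k * f x) a b = k * RInt f a b.
Proof. exact (RInt_scal (V := R_CompleteNormedModule) f a b k). Qed.

Lemma is_derive_eq (f h : R -> R) (x l l' : R) :
  is_derive f x l -> (forall y, f y = h y) -> l = l' -> is_derive h x l'.
Proof. intros H E <-. eapply is_derive_ext; [exact E | exact H]. Qed.

Lemma zero_derive_const (f : R -> R) a b : (forall t, is_derive f t 0) -> f b = f a.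
Proof.
  intros H.
  destruct (Rtotal_order a b) as [Hab | [<- | Hba]]; [| reflexivity |].
  - symmetry. apply (eq_is_derive (V := R_NormedModule)); auto.
  - apply (eq_is_derive (V := R_NormedModule)); auto.
Qed.

Lemma exp_le_compat x y : x <= y -> exp x <= exp y.
Proof. intros [H | ->]; [apply Rlt_le, exp_increasing, H | apply Rle_refl]. Qed.

Lemma sqrt_2PI_pos : 0 < sqrt (2 * PI).
Proof. apply sqrt_lt_R0. pose proof PI_RGT_0. lra. Qed.

Lemma one_plus_sq_pos x : 0 < 1 + x ^ 2.
Proof. nra. Qed.

Definition gauss_kernel (y : R) : R := exp (- y ^ 2 / 2).

Definition gauss_int (t : R) : R := RInt gauss_kernel 0 t.

Lemma gauss_kernel_derive x : is_derive gauss_kernel x (- x * gauss_kernel x).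
Proof.
  unfold gauss_kernel. auto_derive; [auto |].
  replace (- (x * (x * 1)) * / 2) with (- x ^ 2 / 2) by (unfold Rdiv; ring). field.
Qed.

Lemma gauss_kernel_continuous x : continuous gauss_kernel x.
Proof. apply ex_derive_continuous_R. eexists. apply gauss_kernel_derive. Qed.

Lemma ex_RInt_gauss_kernel a b : ex_RInt gauss_kernel a b.
Proof. apply ex_RInt_continuous_R. intros; apply gauss_kernel_continuous. Qed.

Lemma gauss_int_derive t : is_derive gauss_int t (gauss_kernel t).
Proof.
  apply is_derive_RInt with (a := 0).
  - apply filter_forall. intros b. apply RInt_correct_R, ex_RInt_gauss_kernel.
  - apply gauss_kernel_continuous.
Qed.

Lemma gauss_int_nonneg t : 0 <= t -> 0 <= gauss_int t.
Proof.
  intros Ht. apply RInt_ge_0; [exact Ht | apply ex_RInt_gauss_kernel |].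
  intros; apply Rlt_le, exp_pos.
Qed.

Definition feyn_integrand (t x : R) : R := exp (- (t ^ 2 * (1 + x ^ 2)) / 2) / (1 + x ^ 2).

Definition feyn_integral (t : R) : R := RInt (feyn_integrand t) 0 1.

Lemma feyn_integrand_derive t x :
  is_derive (fun u => feyn_integrand u x) t (- t * exp (- (t ^ 2 * (1 + x ^ 2)) / 2)).
Proof.
  unfold feyn_integrand. auto_derive; [auto |].
  pose proof (one_plus_sq_pos x). simpl in *. unfold Rdiv. field. lra.
Qed.

Lemma feyn_integrand_continuous t x : continuous (feyn_integrand t) x.
Proof.
  apply ex_derive_continuous_R. unfold feyn_integrand. auto_derive.
  pose proof (one_plus_sq_pos x). lra.
Qed.

Lemma ex_RInt_feyn_integrand t a b : ex_RInt (feyn_integrand t) a b.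
Proof. apply ex_RInt_continuous_R. intros; apply feyn_integrand_continuous. Qed.

(* Joint continuity of the t-derivative of the integrand, needed to differentiate
   under the integral sign. *)
Lemma feyn_derivative_continuous t x :
  continuity_2d_pt (fun u v => Derive (fun z => feyn_integrand z v) u) t x.
Proof.
  eapply continuity_2d_pt_ext.
  { intros u v. symmetry. apply is_derive_unique, feyn_integrand_derive. }
  apply continuity_2d_pt_mult.
  - apply continuity_2d_pt_opp, continuity_2d_pt_id1.
  - apply continuity_1d_2d_pt_comp.
    { apply derivable_continuous_pt, derivable_pt_exp. }
    apply continuity_2d_pt_mult; [apply continuity_2d_pt_opp | apply continuity_2d_pt_const].
    apply continuity_2d_pt_mult.
    + apply continuity_2d_pt_ext with (f := fun u v => u * (u * 1)); [reflexivity |].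
      repeat apply continuity_2d_pt_mult;
        try apply continuity_2d_pt_id1; apply continuity_2d_pt_const.
    + apply continuity_2d_pt_plus; [apply continuity_2d_pt_const |].
      apply continuity_2d_pt_ext with (f := fun u v => v * (v * 1)); [reflexivity |].
      repeat apply continuity_2d_pt_mult;
        try apply continuity_2d_pt_id2; apply continuity_2d_pt_const.
Qed.

(* The integrated t-derivative factors as -exp(-t^2/2) K t, after the substitution
   y = t x. *)
Lemma feyn_derivative_integral t :
  RInt (fun x => Derive (fun u => feyn_integrand u x) t) 0 1
  = - exp (- t ^ 2 / 2) * gauss_int t.
Proof.
  rewrite (RInt_ext _ (fun x => (- exp (- t ^ 2 / 2)) * (t * gauss_kernel (t * x + 0)))).
  2:{ intros x _. change (@eq R (Derive (fun u => feyn_integrand u x) t)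
                             (- exp (- t ^ 2 / 2) * (t * gauss_kernel (t * x + 0)))).
      transitivity (- t * exp (- (t ^ 2 * (1 + x ^ 2)) / 2)).
      { apply is_derive_unique, feyn_integrand_derive. }
      unfold gauss_kernel.
      replace (- (t ^ 2 * (1 + x ^ 2)) / 2)
        with (- t ^ 2 / 2 + - (t * x + 0) ^ 2 / 2) by field.
      rewrite exp_plus. ring. }
  rewrite RInt_scal_R.
  2:{ apply ex_RInt_continuous_R. intros. apply ex_derive_continuous_R.
      unfold gauss_kernel. auto_derive. auto. }
  unfold gauss_int. f_equal.
  pose proof (RInt_comp_lin (V := R_CompleteNormedModule) gauss_kernel t 0 0 1
                (ex_RInt_gauss_kernel _ _)) as E.
  replace (t * 0 + 0) with 0 in E by ring. replace (t * 1 + 0) with t in E by ring.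
  rewrite <- E. reflexivity.
Qed.

Lemma feyn_integral_derive t : is_derive feyn_integral t (- exp (- t ^ 2 / 2) * gauss_int t).
Proof.
  rewrite <- feyn_derivative_integral.
  apply (is_derive_RInt_param feyn_integrand 0 1 t).
  - apply filter_forall. intros y z _. eexists. apply feyn_integrand_derive.
  - intros x _. apply feyn_derivative_continuous.
  - apply filter_forall. intros y. apply ex_RInt_feyn_integrand.
Qed.

Lemma feyn_integral_0 : feyn_integral 0 = PI / 4.
Proof.
  unfold feyn_integral.
  rewrite (RInt_ext _ (fun x => / (1 + x²))).
  2:{ intros x _. unfold feyn_integrand, Rsqr. pose proof (one_plus_sq_pos x).
      replace (- (0 ^ 2 * (1 + x ^ 2)) / 2) with 0 by (simpl; field).
      rewrite exp_0. simpl in *. field. lra. }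
  assert (H : is_RInt (fun x => / (1 + x²)) 0 1 (minus (atan 1) (atan 0))).
  { apply (is_RInt_derive (V := R_CompleteNormedModule) atan).
    - intros; apply is_derive_atan.
    - intros. apply ex_derive_continuous_R. auto_derive. unfold Rsqr. nra. }
  rewrite (is_RInt_unique_R _ _ _ _ H), atan_1, atan_0.
  unfold minus, plus, opp. simpl. ring.
Qed.

Lemma feynman_identity t : gauss_int t ^ 2 + 2 * feyn_integral t = PI / 2.
Proof.
  set (F u := gauss_int u ^ 2 + 2 * feyn_integral u).
  assert (HF : forall u, is_derive F u 0).
  { intros u. eapply is_derive_eq.
    - apply (is_derive_plus _ _ u _ _ (is_derive_pow gauss_int 2 u _ (gauss_int_derive u))
               (is_derive_scal feyn_integral u 2 _ (feyn_integral_derive u))).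
    - reflexivity.
    - unfold plus, scal, gauss_kernel. simpl. unfold mult. simpl. ring. }
  change (F t = PI / 2). rewrite (zero_derive_const F 0 t HF).
  unfold F, gauss_int. rewrite RInt_point, feyn_integral_0. unfold zero. simpl. field.
Qed.

Lemma feyn_integral_bounds t : 0 <= feyn_integral t <= exp (- t ^ 2 / 2).
Proof.
  unfold feyn_integral. split.
  - apply RInt_ge_0; [lra | apply ex_RInt_feyn_integrand |].
    intros x _. unfold feyn_integrand.
    apply Rlt_le, Rdiv_lt_0_compat; [apply exp_pos | apply one_plus_sq_pos].
  - replace (exp (- t ^ 2 / 2)) with (RInt (fun _ => exp (- t ^ 2 / 2)) 0 1)
      by (rewrite RInt_const; unfold scal; simpl; unfold mult; simpl; ring).
    apply RInt_le; [lra | apply ex_RInt_feyn_integrand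
                   | apply ex_RInt_continuous_R; intros; apply continuous_const |].
    intros x _. unfold feyn_integrand. pose proof (one_plus_sq_pos x).
    apply (Rle_trans _ (exp (- (t ^ 2 * (1 + x ^ 2)) / 2))).
    + unfold Rdiv at 1. rewrite <- (Rmult_1_r (exp _)) at 2.
      apply Rmult_le_compat_l; [apply Rlt_le, exp_pos |].
      rewrite <- Rinv_1. apply Rinv_le_contravar; [lra | nra].
    + apply exp_le_compat.
      assert (0 <= t ^ 2 * x ^ 2) by (apply Rmult_le_pos; apply pow2_ge_0). nra.
Qed.

Lemma gauss_kernel_limit : filterlim gauss_kernel (Rbar_locally p_infty) (locally 0).
Proof.
  change (filterlim gauss_kernel (Rbar_locally p_infty) (Rbar_locally (Finite 0))).
  apply (filterlim_le_le (F := Rbar_locally p_infty) (fun _ => 0) _ (fun t => exp (- t))).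
  - exists 2. intros t Ht. split; [apply Rlt_le, exp_pos | apply exp_le_compat; nra].
  - apply filterlim_const.
  - apply (is_lim_comp exp Ropp p_infty 0 m_infty).
    + apply is_lim_exp_m.
    + apply (is_lim_opp (fun y => y) p_infty p_infty). apply is_lim_id.
    + exists 0. intros; discriminate.
Qed.

Lemma gauss_int_limit : filterlim gauss_int (Rbar_locally p_infty) (locally (sqrt (PI / 2))).
Proof.
  apply (filterlim_ext_loc (fun t => sqrt (PI / 2 - 2 * feyn_integral t))).
  - exists 0. intros t Ht.
    replace (PI / 2 - 2 * feyn_integral t) with (gauss_int t ^ 2)
      by (pose proof (feynman_identity t); lra).
    apply sqrt_pow2, gauss_int_nonneg. lra.
  - apply (filterlim_comp _ _ _ (fun t => PI / 2 - 2 * feyn_integral t) sqrt _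
             (locally (PI / 2))); [| apply continuous_sqrt].
    apply (filterlim_comp _ _ _ feyn_integral (fun s => PI / 2 - 2 * s) _ (locally 0)).
    + change (filterlim feyn_integral (Rbar_locally p_infty) (Rbar_locally (Finite 0))).
      apply (filterlim_le_le (F := Rbar_locally p_infty) (fun _ => 0) _ gauss_kernel).
      * apply filter_forall. apply feyn_integral_bounds.
      * apply filterlim_const.
      * apply gauss_kernel_limit.
    + pose proof (ex_derive_continuous_R (fun s => PI / 2 - 2 * s) 0
                    ltac:(auto_derive; auto)) as C.
      unfold continuous in C. replace (PI / 2 - 2 * 0) with (PI / 2) in C by ring. exact C.
Qed.

(* Phi x = P(0 <= Z <= x) for Z standard normal (negative for x < 0). *)
Definition Phi (x : R) : R := gauss_int x / sqrt (2 * PI).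

Lemma Phi_derive x : is_derive Phi x (gauss_density x).
Proof.
  eapply is_derive_eq.
  - apply (is_derive_scal gauss_int x (/ sqrt (2 * PI)) _ (gauss_int_derive x)).
  - intros y. unfold Phi, scal. simpl. unfold mult. simpl. unfold Rdiv. ring.
  - unfold gauss_density, gauss_kernel, scal, Rdiv. simpl. unfold mult. simpl. ring.
Qed.

Lemma Phi_0 : Phi 0 = 0.
Proof. unfold Phi, gauss_int. rewrite RInt_point. unfold zero. simpl. unfold Rdiv. ring. Qed.

Lemma Phi_nondecreasing x y : x <= y -> Phi x <= Phi y.
Proof.
  intros Hxy. unfold Phi, Rdiv. apply Rmult_le_compat_r.
  { apply Rlt_le, Rinv_0_lt_compat, sqrt_2PI_pos. }
  unfold gauss_int. rewrite <- (RInt_Chasles gauss_kernel 0 x y) by apply ex_RInt_gauss_kernel.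
  assert (0 <= RInt gauss_kernel x y).
  { apply RInt_ge_0; [exact Hxy | apply ex_RInt_gauss_kernel |].
    intros; apply Rlt_le, exp_pos. }
  unfold plus. simpl. lra.
Qed.

Lemma Phi_odd x : Phi (- x) = - Phi x.
Proof.
  unfold Phi, gauss_int.
  pose proof (RInt_comp_lin (V := R_CompleteNormedModule) gauss_kernel (-1) 0 0 x
                (ex_RInt_gauss_kernel _ _)) as E.
  replace (-1 * 0 + 0) with 0 in E by ring. replace (-1 * x + 0) with (- x) in E by ring.
  rewrite <- E, (RInt_ext _ (fun y => -1 * gauss_kernel y)), RInt_scal_R.
  - unfold Rdiv. ring.
  - apply ex_RInt_gauss_kernel.
  - intros y _. unfold gauss_kernel.
    replace ((-1 * y + 0) ^ 2) with (y ^ 2) by ring. reflexivity.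
Qed.

Lemma Phi_limit_p : filterlim Phi (Rbar_locally p_infty) (locally (1 / 2)).
Proof.
  replace (1 / 2) with (sqrt (PI / 2) / sqrt (2 * PI)).
  - apply (filterlim_comp _ _ _ gauss_int (fun k => k / sqrt (2 * PI)) _
             (locally (sqrt (PI / 2)))); [apply gauss_int_limit |].
    apply (ex_derive_continuous_R (fun k => k / sqrt (2 * PI))). auto_derive. auto.
  - pose proof PI_RGT_0.
    rewrite <- sqrt_div_alt by lra.
    replace (PI / 2 / (2 * PI)) with (/ 2 * / 2) by (field; lra).
    rewrite sqrt_square; [field | lra].
Qed.

Lemma Phi_limit_m : filterlim Phi (Rbar_locally m_infty) (locally (- (1 / 2))).
Proof.
  apply (filterlim_ext (fun x => - Phi (- x))).
  { intros x. rewrite Phi_odd. ring. }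
  apply (filterlim_comp _ _ _ (fun x => Phi (- x)) Ropp _ (locally (1 / 2))).
  - apply (filterlim_comp _ _ _ Ropp Phi _ (Rbar_locally p_infty)).
    + apply (filterlim_Rbar_opp m_infty).
    + apply Phi_limit_p.
  - apply (ex_derive_continuous_R Ropp). auto_derive. auto.
Qed.

Lemma Phi_bounds x : - (1 / 2) <= Phi x <= 1 / 2.
Proof.
  split.
  - apply (filterlim_le (F := Rbar_locally m_infty) Phi (fun _ => Phi x)
             (Finite (- (1 / 2))) (Finite (Phi x))).
    + exists x. intros y Hy. apply Phi_nondecreasing. lra.
    + apply Phi_limit_m.
    + apply filterlim_const.
  - apply (filterlim_le (F := Rbar_locally p_infty) (fun _ => Phi x) Phi
             (Finite (Phi x)) (Finite (1 / 2))).
    + exists x. intros y Hy. apply Phi_nondecreasing. lra.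
    + apply filterlim_const.
    + apply Phi_limit_p.
Qed.

Lemma shifted_Phi_derive A c x :
  is_derive (fun z => A * Phi (z + c)) x (A * gauss_density (x + c)).
Proof.
  eapply is_derive_eq.
  - apply (is_derive_scal (fun z => Phi (z + c)) x A).
    apply (is_derive_comp Phi (fun z => z + c) x (gauss_density (x + c)) 1);
      [apply Phi_derive | auto_derive; auto; ring].
  - reflexivity.
  - unfold scal. simpl. unfold mult. simpl. ring.
Qed.

Lemma shifted_Phi_limit_p A c :
  filterlim (fun z => A * Phi (z + c)) (Rbar_locally p_infty) (locally (A * (1 / 2))).
Proof.
  apply (filterlim_comp _ _ _ (fun z => Phi (z + c)) (fun p => A * p) _ (locally (1 / 2))).
  - apply (filterlim_comp _ _ _ (fun z => z + c) Phi _ (Rbar_locally p_infty));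
      [| apply Phi_limit_p].
    apply (is_lim_plus (fun z => z) (fun _ => c) p_infty p_infty c p_infty);
      [apply is_lim_id | apply is_lim_const | reflexivity].
  - apply (ex_derive_continuous_R (fun p => A * p)). auto_derive. auto.
Qed.

Lemma shifted_Phi_limit_m A c :
  filterlim (fun z => A * Phi (z + c)) (Rbar_locally m_infty) (locally (A * - (1 / 2))).
Proof.
  apply (filterlim_comp _ _ _ (fun z => Phi (z + c)) (fun p => A * p) _
           (locally (- (1 / 2)))).
  - apply (filterlim_comp _ _ _ (fun z => z + c) Phi _ (Rbar_locally m_infty));
      [| apply Phi_limit_m].
    apply (is_lim_plus (fun z => z) (fun _ => c) m_infty m_infty c m_infty);
      [apply is_lim_id | apply is_lim_const | reflexivity].
  - apply (ex_derive_continuous_R (fun p => A * p)). auto_derive. auto.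
Qed.

Lemma lim_at_point (f : R -> R) a : filterlim f (at_point a) (locally (f a)).
Proof. intros P HP. unfold filtermap, at_point. apply locally_singleton. exact HP. Qed.

Lemma is_RInt_gen_primitive {Fa Fb : (R -> Prop) -> Prop} {FFa : Filter Fa}
  {FFb : Filter Fb} (F f : R -> R) (la lb : R) :
  (forall x, is_derive F x (f x)) -> (forall x, continuous f x) ->
  filterlim F Fa (locally la) -> filterlim F Fb (locally lb) ->
  is_RInt_gen f Fa Fb (lb - la).
Proof.
  intros HF Hf Ha Hb.
  assert (DF : forall x, Derive F x = f x) by (intros; apply is_derive_unique, HF).
  apply (is_RInt_gen_ext (Derive F)).
  { apply filter_forall. intros ab x _. apply DF. }
  apply is_RInt_gen_Derive; [| | exact Ha | exact Hb]; apply filter_forall; intros ab x _.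
  - eexists. apply HF.
  - apply (continuous_ext f); [intros; symmetry; apply DF | apply Hf].
Qed.

Lemma is_RInt_gen_ext_right (f h : R -> R) a l :
  (forall x, a < x -> f x = h x) ->
  is_RInt_gen f (at_point a) (Rbar_locally p_infty) l ->
  is_RInt_gen h (at_point a) (Rbar_locally p_infty) l.
Proof.
  intros E. apply is_RInt_gen_ext.
  apply (Filter_prod _ _ _ (fun u => u = a) (fun v => a < v)); [reflexivity | exists a; auto |].
  intros u v -> Hv x Hx. simpl in Hx.
  rewrite Rmin_left in Hx by lra. apply E. lra.
Qed.

Lemma is_RInt_gen_ext_left (f h : R -> R) a l :
  (forall x, x < a -> f x = h x) ->
  is_RInt_gen f (Rbar_locally m_infty) (at_point a) l ->
  is_RInt_gen h (Rbar_locally m_infty) (at_point a) l.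
Proof.
  intros E. apply is_RInt_gen_ext.
  apply (Filter_prod _ _ _ (fun u => u < a) (fun v => v = a)); [exists a; auto | reflexivity |].
  intros u v Hu -> x Hx. simpl in Hx.
  rewrite Rmax_right in Hx by lra. apply E. lra.
Qed.

Lemma integrand_right s mu z : 0 <= mu + s * z ->
  ell_exp (mu + s * z) * gauss_density z = exp (s ^ 2 / 2 - mu) * gauss_density (z + s).
Proof.
  intros Hz. unfold ell_exp, gauss_density, Rdiv. rewrite Rabs_right by lra.
  rewrite <- !Rmult_assoc, <- !exp_plus.
  replace (- (mu + s * z) + - z ^ 2 * / 2) with (s ^ 2 / 2 - mu + - (z + s) ^ 2 * / 2)
    by field.
  reflexivity.
Qed.

Lemma integrand_left s mu z : mu + s * z <= 0 ->
  ell_exp (mu + s * z) * gauss_density z = exp (s ^ 2 / 2 + mu) * gauss_density (z + - s).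
Proof.
  intros Hz. unfold ell_exp, gauss_density, Rdiv. rewrite Rabs_left1 by lra.
  rewrite <- !Rmult_assoc, <- !exp_plus.
  replace (- - (mu + s * z) + - z ^ 2 * / 2) with (s ^ 2 / 2 + mu + - (z + - s) ^ 2 * / 2)
    by field.
  reflexivity.
Qed.

Definition g_closed (s mu : R) : R :=
  exp (s ^ 2 / 2 - mu) * (1 / 2 - Phi (s - mu / s)) +
  exp (s ^ 2 / 2 + mu) * (Phi (- mu / s - s) + 1 / 2).

Lemma g_closed_form s mu : 0 < s -> g s mu = g_closed s mu.
Proof.
  intros Hs. unfold g.
  set (f z := ell_exp (mu + s * z) * gauss_density z).
  set (z0 := - mu / s). set (A := exp (s ^ 2 / 2 - mu)). set (B := exp (s ^ 2 / 2 + mu)).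
  assert (Hsign : forall z, mu + s * z = s * (z - z0)) by (intros; unfold z0; field; lra).
  assert (HR : is_RInt_gen f (at_point z0) (Rbar_locally p_infty)
                 (A * (1 / 2) - A * Phi (z0 + s))).
  { apply (is_RInt_gen_ext_right (fun z => A * gauss_density (z + s))).
    - intros z Hz. symmetry. apply integrand_right. rewrite Hsign. nra.
    - apply (is_RInt_gen_primitive (fun z => A * Phi (z + s))).
      + intros; apply shifted_Phi_derive.
      + intros. apply (ex_derive_continuous_R (fun x => A * gauss_density (x + s))).
        unfold gauss_density. auto_derive. auto.
      + apply (lim_at_point (fun z => A * Phi (z + s))).
      + apply shifted_Phi_limit_p. }
  assert (HL : is_RInt_gen f (Rbar_locally m_infty) (at_point z0)
                 (B * Phi (z0 + - s) - B * - (1 / 2))).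
  { apply (is_RInt_gen_ext_left (fun z => B * gauss_density (z + - s))).
    - intros z Hz. symmetry. apply integrand_left. rewrite Hsign. nra.
    - apply (is_RInt_gen_primitive (fun z => B * Phi (z + - s))).
      + intros; apply shifted_Phi_derive.
      + intros. apply (ex_derive_continuous_R (fun x => B * gauss_density (x + - s))).
        unfold gauss_density. auto_derive. auto.
      + apply shifted_Phi_limit_m.
      + apply (lim_at_point (fun z => B * Phi (z + - s))). }
  rewrite (is_RInt_gen_unique _ _ (is_RInt_gen_Chasles _ _ _ _ HL HR)).
  unfold g_closed. fold A B. unfold plus. simpl.
  replace (z0 + s) with (s - mu / s) by (unfold z0; field; lra).
  replace (z0 + - s) with (- mu / s - s) by (unfold z0; field; lra).
  ring.
Qed.

(* Differentiating the closed form in s; the two density terms combine into one. *)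
Lemma g_closed_derive s mu : 0 < s ->
  is_derive (fun t => g_closed t mu) s
    (s * g_closed s mu - 2 * exp (- mu ^ 2 / (2 * s ^ 2)) / sqrt (2 * PI)).
Proof.
  intros Hs. unfold g_closed. auto_derive.
  { repeat split; try lra; eexists; apply Phi_derive. }
  set (E1 := exp (s ^ 2 / 2 - mu)). set (E2 := exp (s ^ 2 / 2 + mu)).
  set (T := exp (- mu ^ 2 / (2 * s ^ 2))).
  replace (exp (s * (s * 1) * / 2 + - mu)) with E1 by (unfold E1; f_equal; field).
  replace (exp (s * (s * 1) * / 2 + mu)) with E2 by (unfold E2; f_equal; field).
  replace (s + - (mu * / s)) with (s - mu / s) by (field; lra).
  replace (- mu * / s + - s) with (- mu / s - s) by (field; lra).
  rewrite !(is_derive_unique _ _ _ (Phi_derive _)).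
  assert (G1 : gauss_density (s - mu / s) = T / E1 / sqrt (2 * PI)).
  { unfold gauss_density, T, E1. f_equal.
    unfold Rdiv. rewrite <- exp_Ropp, <- exp_plus. f_equal. field. lra. }
  assert (G2 : gauss_density (- mu / s - s) = T / E2 / sqrt (2 * PI)).
  { unfold gauss_density, T, E2. f_equal.
    unfold Rdiv. rewrite <- exp_Ropp, <- exp_plus. f_equal. field. lra. }
  rewrite G1, G2.
  assert (0 < E1) by apply exp_pos. assert (0 < E2) by apply exp_pos.
  pose proof sqrt_2PI_pos.
  clearbody E1 E2 T.
  field. lra.
Qed.

Lemma c0_pos : 0 < c0.
Proof.
  unfold c0. apply Rdiv_lt_0_compat; [| apply sqrt_lt_R0, PI_RGT_0].
  assert (0 < sqrt 2) by (apply sqrt_lt_R0; lra). lra.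
Qed.

Lemma r_ge_sq s : 0 < s -> s ^ 2 <= r s.
Proof.
  intros Hs. unfold r. destruct (Rle_dec s c0).
  - assert (0 <= s * sqrt (2 * ln (c0 / s))) by (apply Rmult_le_pos; [lra | apply sqrt_pos]).
    lra.
  - pose proof (pow2_ge_0 s). lra.
Qed.

Lemma ln_nonneg x : 1 <= x -> 0 <= ln x.
Proof.
  intros [Hx | <-]; [| rewrite ln_1; lra].
  rewrite <- ln_1. apply Rlt_le, ln_increasing; lra.
Qed.

(* The choice of r makes the Gaussian factor e^(-(m-s^2)^2/(2s^2)) at most s/c0:
   for s <= c0 it is at most e^(-ln(c0/s)), for s > c0 it is at most 1. *)
Lemma gauss_tail_bound s m : 0 < s -> r s <= m ->
  exp (- (m - s ^ 2) ^ 2 / (2 * s ^ 2)) <= s / c0.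
Proof.
  intros Hs Hm. pose proof c0_pos as Hc.
  assert (Hs2 : 0 < s ^ 2) by (apply pow_lt; lra).
  unfold r in Hm. destruct (Rle_dec s c0) as [Hle | Hgt].
  - set (L := ln (c0 / s)) in *.
    assert (HL : 0 <= L).
    { apply ln_nonneg. apply (Rmult_le_reg_r s); [lra |].
      unfold Rdiv. rewrite Rmult_assoc, Rinv_l by lra. lra. }
    set (q := sqrt (2 * L)) in Hm.
    assert (Hq : q * q = 2 * L) by (apply sqrt_sqrt; lra).
    assert (0 <= s * q) by (apply Rmult_le_pos; [lra | apply sqrt_pos]).
    assert (Hsq : 2 * s ^ 2 * L <= (m - s ^ 2) ^ 2).
    { replace (2 * s ^ 2 * L) with ((s * q) * (s * q))
        by (replace (s * q * (s * q)) with (s ^ 2 * (q * q)) by ring; rewrite Hq; ring).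
      simpl. nra. }
    apply (Rle_trans _ (exp (- L))).
    + apply exp_le_compat. apply (Rmult_le_reg_r (2 * s ^ 2)); [lra |].
      replace (- (m - s ^ 2) ^ 2 / (2 * s ^ 2) * (2 * s ^ 2)) with (- (m - s ^ 2) ^ 2)
        by (field; lra).
      lra.
    + rewrite exp_Ropp. unfold L. rewrite exp_ln by (apply Rdiv_lt_0_compat; lra).
      right. field. split; lra.
  - apply (Rle_trans _ 1).
    + rewrite <- exp_0. apply exp_le_compat.
      assert (0 <= (m - s ^ 2) ^ 2 / (2 * s ^ 2))
        by (apply Rdiv_le_0_compat; [apply pow2_ge_0 | lra]).
      lra.
    + apply (Rmult_le_reg_r c0); [lra |].
      unfold Rdiv. rewrite Rmult_assoc, Rinv_l by lra. lra.
Qed.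

Lemma density_scale s : 2 / sqrt (2 * PI) * (s / c0) = s / 4.
Proof.
  unfold c0. pose proof PI_RGT_0.
  rewrite sqrt_mult by lra.
  assert (0 < sqrt 2) by (apply sqrt_lt_R0; lra).
  assert (0 < sqrt PI) by (apply sqrt_lt_R0; lra).
  pose proof (sqrt_sqrt 2 ltac:(lra)).
  field_simplify; [| split; lra].
  replace (sqrt 2 ^ 2) with 2 by (simpl; lra). field.
Qed.

(* The closed form is even in mu, by oddness of Phi. *)
Lemma g_closed_even s mu : g_closed s (- mu) = g_closed s mu.
Proof.
  unfold g_closed.
  replace (s - - mu / s) with (- (- mu / s - s)) by (unfold Rdiv; ring).
  replace (- - mu / s - s) with (- (s - mu / s)) by (unfold Rdiv; ring).
  rewrite !Phi_odd. replace (s ^ 2 / 2 - - mu) with (s ^ 2 / 2 + mu) by ring.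
  replace (s ^ 2 / 2 + - mu) with (s ^ 2 / 2 - mu) by ring.
  ring.
Qed.

Lemma g_closed_lower s mu : 0 < s -> s ^ 2 <= Rabs mu ->
  exp (s ^ 2 / 2 - Rabs mu) / 2 <= g_closed s mu.
Proof.
  intros Hs Hm.
  assert (Heven : g_closed s mu = g_closed s (Rabs mu)).
  { unfold Rabs. destruct (Rcase_abs mu); [rewrite g_closed_even |]; reflexivity. }
  rewrite Heven. set (m := Rabs mu) in *. unfold g_closed.
  assert (Hneg : Phi (s - m / s) <= 0).
  { rewrite <- Phi_0. apply Phi_nondecreasing.
    assert (s <= m / s); [| lra].
    apply (Rmult_le_reg_r s); [lra |].
    unfold Rdiv. rewrite Rmult_assoc, Rinv_l by lra. simpl in Hm. lra. }
  pose proof (Phi_bounds (- m / s - s)).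
  pose proof (exp_pos (s ^ 2 / 2 - m)). pose proof (exp_pos (s ^ 2 / 2 + m)).
  nra.
Qed.

Lemma density_term_bound s mu : 0 < s -> r s <= Rabs mu ->
  2 * exp (- mu ^ 2 / (2 * s ^ 2)) / sqrt (2 * PI) <= exp (s ^ 2 / 2 - Rabs mu) * (s / 4).
Proof.
  intros Hs Hm. pose proof sqrt_2PI_pos.
  assert (Hsplit : exp (- mu ^ 2 / (2 * s ^ 2))
                   = exp (s ^ 2 / 2 - Rabs mu) * exp (- (Rabs mu - s ^ 2) ^ 2 / (2 * s ^ 2))).
  { rewrite <- exp_plus, <- (pow2_abs mu). f_equal. field. lra. }
  rewrite Hsplit, <- (density_scale s).
  replace (2 * (exp (s ^ 2 / 2 - Rabs mu) * exp (- (Rabs mu - s ^ 2) ^ 2 / (2 * s ^ 2)))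
             / sqrt (2 * PI))
    with (exp (s ^ 2 / 2 - Rabs mu)
            * (2 / sqrt (2 * PI) * exp (- (Rabs mu - s ^ 2) ^ 2 / (2 * s ^ 2))))
    by (field; lra).
  apply Rmult_le_compat_l; [apply Rlt_le, exp_pos |].
  apply Rmult_le_compat_l; [apply Rlt_le, Rdiv_lt_0_compat; lra |].
  apply gauss_tail_bound; assumption.
Qed.

Lemma derivative_lower_bound s mu : 0 < s -> r s <= Rabs mu ->
  / 4 * s * ell_exp mu <= s * g_closed s mu - 2 * exp (- mu ^ 2 / (2 * s ^ 2)) / sqrt (2 * PI).
Proof.
  intros Hs Hm.
  pose proof (g_closed_lower s mu Hs (Rle_trans _ _ _ (r_ge_sq s Hs) Hm)) as Hlow.
  pose proof (density_term_bound s mu Hs Hm) as Hdens.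
  assert (Hexp : ell_exp mu <= exp (s ^ 2 / 2 - Rabs mu)).
  { apply exp_le_compat. pose proof (pow2_ge_0 s). lra. }
  nra.
Qed.

Theorem lemma5 (sigma mu : R) (Hs : 0 < sigma) (Hmu : r sigma <= Rabs mu) :
  ex_derive (fun s => g s mu) sigma /\
  Derive (fun s => g s mu) sigma >= / 4 * sigma * ell_exp mu /\
  / 4 * sigma * ell_exp mu > 0.
Proof.
  assert (Hloc : locally sigma (fun t => g_closed t mu = g t mu)).
  { exists (mkposreal sigma Hs). intros t Ht.
    apply (Rabs_def2 (t - sigma)) in Ht. symmetry. apply g_closed_form. simpl in Ht. lra. }
  pose proof (is_derive_ext_loc _ _ _ _ Hloc (g_closed_derive sigma mu Hs)) as Hder.
  split; [eexists; exact Hder |]. split.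
  - replace (Derive (fun s => g s mu) sigma) with
      (sigma * g_closed sigma mu - 2 * exp (- mu ^ 2 / (2 * sigma ^ 2)) / sqrt (2 * PI))
      by (symmetry; apply is_derive_unique, Hder).
    apply Rle_ge, derivative_lower_bound; assumption.
  - unfold ell_exp. pose proof (exp_pos (- Rabs mu)).
    apply Rmult_gt_0_compat; [apply Rmult_gt_0_compat |]; lra.
Qed.
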